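(* Let $\mathbb{H}$ be a finite-dimensional complex Hilbert space with $\dim\mathbb{H}\ge 2$, let $\alpha,\beta$ be nonzero complex numbers with $|\alpha|^2+|\beta|^2=1$, and let $|\phi\rangle\in\mathbb{H}$ be a fixed unit vector (fixed means: independent of the input state $|\psi\rangle$; it may be known or unknown). Then there is no probabilistic quantum transformation $\mathcal{F}$ from $\mathbb{H}\otimes\mathbb{H}$ to $\mathbb{H}$ such that for every pure state $\rho_\psi$ on $\mathbb{H}$, $$\mathcal{F}(\rho_\psi\otimes\rho_\phi)=\rho_\varphi,\qquad |\varphi\rangle\propto \alpha|\psi\rangle+\beta|\phi\rangle .$$
   Context: For a unit vector $|\psi\rangle$, $\rho_\psi=|\psi\rangle\langle\psi|$ denotes the corresponding pure state; vectors differing by a global phase define the same state, and $|\varphi\rangle\propto|\chi\rangle$ means $|\varphi\rangle$ equals the normalization of $|\chi\rangle$ up to a global phase (whenever $|\chi\rangle\neq0$). A probabilistic quantum transformation from $\mathbb{H}_1$ to $\mathbb{H}_2$ is a completely positive, trace-non-increasing linear map $\mathcal{F}$ from operators on $\mathbb{H}_1$ to operators on $\mathbb{H}_2$ (equivalently, a unitary on $\mathbb{H}_1$ tensored with ancilla and probe spaces followed by post-selection on a projective measurement outcome); the equation $\mathcal{F}(\rho)=\sigma$ between pure states means $\mathcal{F}(\rho)=p\,\sigma$ for some success probability $p>0$ (which may depend on $\rho$). *)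

(* Finite-dimensional complex Hilbert space C^n modelled as
   column vectors 'cV[C]_n over an arbitrary numClosedFieldType C (covers the
   complex numbers; all notions below are algebraic). *)
From HB Require Import structures.
From mathcomp Require Import all_boot all_order all_algebra.
Set Implicit Arguments. Unset Strict Implicit. Unset Printing Implicit Defensive.
Import Order.TTheory GRing.Theory Num.Theory.
Local Open Scope ring_scope.

Section Q.
Variable C : numClosedFieldType.

Definition adj m n (A : 'M[C]_(m, n)) : 'M[C]_(n, m) := (map_mx Num.conj A)^T.

Definition inner n (x y : 'cV[C]_n) : C := (adj x *m y) 0 0.
Definition unit_vec n (x : 'cV[C]_n) : Prop := inner x x = 1.

Definition proj n (x : 'cV[C]_n) : 'M[C]_n := x *m adj x.

(* positive semidefinite (over C this includes Hermitian) *)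
Definition psd n (A : 'M[C]_n) : Prop := forall x : 'cV[C]_n, 0 <= inner x (A *m x).

(* index splitting 'I_(m*n) ~ 'I_m * 'I_n (the mxvec ordering) *)
Definition tidx m n (k : 'I_(m * n)) : 'I_m * 'I_n :=
  enum_val (cast_ord (esym (@mxvec_cast m n)) k).

Definition kron m1 n1 m2 n2 (A : 'M[C]_(m1, n1)) (B : 'M[C]_(m2, n2))
  : 'M[C]_(m1 * m2, n1 * n2) :=
  \matrix_(k, l) (A (tidx k).1 (tidx l).1 * B (tidx k).2 (tidx l).2).

Definition block k m (X : 'M[C]_(k * m)) (a b : 'I_k) : 'M[C]_m :=
  \matrix_(r, c) X (mxvec_index a r) (mxvec_index b c).

(* ampliation id_k (x) F *)
Definition ampl k m p (F : 'M[C]_m -> 'M[C]_p) (X : 'M[C]_(k * m)) : 'M[C]_(k * p) :=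
  \matrix_(i, j) F (block X (tidx i).1 (tidx j).1) (tidx i).2 (tidx j).2.

Definition completely_positive m p (F : 'M[C]_m -> 'M[C]_p) : Prop :=
  forall (k : nat) (X : 'M[C]_(k * m)), psd X -> psd (ampl F X).

Definition trace_nonincreasing m p (F : 'M[C]_m -> 'M[C]_p) : Prop :=
  forall X : 'M[C]_m, psd X -> \tr (F X) <= \tr X.

Definition prob_qtrans m p (F : 'M[C]_m -> 'M[C]_p) : Prop :=
  linear F /\ completely_positive F /\ trace_nonincreasing F.

End Q.

(** A pure state determines its vector only up to a global phase: [psi] and
    [-psi] give the same input [rho_psi (x) rho_phi], hence any map [F] sends
    them to the same output.  The prescribed outputs are the states of
    [alpha psi + beta phi] and [-alpha psi + beta phi], and these coincide only
    when [phi] is collinear with [psi].  Choosing [psi] among two distinct basis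
    vectors forces [phi = 0]. *)
From HB Require Import structures.
From mathcomp Require Import all_boot all_order all_algebra.
From mathcomp Require Import ring.
Set Implicit Arguments.
Unset Strict Implicit.
Unset Printing Implicit Defensive.
Import Order.TTheory GRing.Theory Num.Theory.
Local Open Scope ring_scope.

Section PureStates.
Variables (C : numClosedFieldType) (n : nat).
Implicit Types (x y : 'cV[C]_n) (a b : C).

Lemma projE x j k : proj x j k = x j 0 * (x k 0)^*.
Proof. by rewrite /proj !mxE big_ord1 /adj !mxE. Qed.

Lemma proj_opp x : proj (- x) = proj x.
Proof. by apply/matrixP => j k; rewrite !projE !mxE rmorphN mulrNN. Qed.

Lemma inner_selfE x : inner x x = \sum_k `|x k 0| ^+ 2.
Proof.
rewrite /inner /adj !mxE; apply: eq_bigr => k _.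
by rewrite !mxE mulrC -normCK.
Qed.

Lemma inner_self_eq0 x : inner x x = 0 -> x = 0.
Proof.
rewrite inner_selfE => /psumr_eq0P x0.
have {}x0 := x0 (fun k _ => exprn_ge0 _ (normr_ge0 _)).
apply/matrixP => j b; rewrite ord1 mxE.
by have /eqP := x0 j isT; rewrite expf_eq0 normr_eq0 => /eqP.
Qed.

Lemma unit_vec_neq0 x : unit_vec x -> x != 0.
Proof.
rewrite /unit_vec => x1; apply: contra_eqN x1 => /eqP->.
by rewrite /inner mulmx0 mxE eq_sym oner_eq0.
Qed.

Lemma unit_vec_opp x : unit_vec x -> unit_vec (- x).
Proof.
rewrite /unit_vec !inner_selfE => <-.
by apply: eq_bigr => k _; rewrite mxE normrN.
Qed.

Lemma unit_vec_delta (i : 'I_n) : unit_vec (delta_mx i 0 : 'cV[C]_n).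
Proof.
rewrite /unit_vec inner_selfE (bigD1 i) //= big1 => [|k ki].
  by rewrite mxE !eqxx normr1 expr1n addr0.
by rewrite mxE (negbTE ki) normr0 expr0n.
Qed.

(* Column [k] of both sides, for some [x k 0 != 0], yields the scalar. *)
Lemma scale_proj_collinear a b x y :
  a != 0 -> x != 0 -> a *: proj x = b *: proj y -> exists c, x = c *: y.
Proof.
move=> a0 x0 xy.
have [k [l xk0]] := matrix0Pn _ x0; rewrite ord1 {l} in xk0.
have axk0 : a * (x k 0)^* != 0 by rewrite mulf_neq0 ?conjC_eq0.
exists (b * (y k 0)^* / (a * (x k 0)^*)); apply/matrixP => j l.
rewrite ord1 {l} !mxE; apply: (mulIf axk0).
have /= := congr1 (fun M : 'M[C]_n => M j k) xy.
rewrite [LHS]mxE [RHS]mxE !projE mulrCA => ->.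
by rewrite mulrAC divfK // mulrA mulrAC.
Qed.

Lemma scale_delta_eq0 (i j : 'I_n) a b :
  i != j -> a *: (delta_mx i 0 : 'cV[C]_n) = b *: delta_mx j 0 -> a = 0.
Proof.
move=> ij /(congr1 (fun v : 'cV[C]_n => v i 0)).
by rewrite !mxE !eqxx (negbTE ij) /= mulr1 mulr0.
Qed.

End PureStates.

Section PhaseAmbiguity.
Variables (C : numClosedFieldType) (n : nat) (alpha beta : C) (phi : 'cV[C]_n).
Hypotheses (alpha0 : alpha != 0) (beta0 : beta != 0).

Local Notation superpose psi := (alpha *: psi + beta *: phi).

(* The case [c = 1] is excluded because it would give [2 alpha e = 0]. *)
Lemma superpose_opp_collinear (e : 'cV[C]_n) c :
  e != 0 -> superpose e = c *: superpose (- e) -> exists d, phi = d *: e.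
Proof.
move=> e0 ec.
have eq_phi : ((c - 1) * beta) *: phi = ((1 + c) * alpha) *: e.
  apply/matrixP => j l.
  have := congr1 (fun v : 'cV[C]_n => v j l) ec; rewrite !mxE => ecj.
  apply/eqP; rewrite -subr_eq0 -(subrr (c * (alpha * - e j l + beta * phi j l))) -{2}ecj.
  by apply/eqP; ring.
have cb0 : (c - 1) * beta != 0.
  rewrite mulf_neq0 // subr_eq0; apply: contra_neq e0 => c1.
  move: eq_phi; rewrite c1 subrr mul0r scale0r => /esym/eqP.
  by rewrite scaler_eq0 mulf_eq0 (negbTE alpha0) orbF -[1 + 1 : C]/2%:R pnatr_eq0 => /eqP.
exists ((1 + c) * alpha / ((c - 1) * beta)).
by rewrite mulrC -scalerA -eq_phi scalerA mulVf // scale1r.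
Qed.

Lemma superpose_map_collinear (G : 'M[C]_n -> 'M[C]_n) :
  (forall psi, unit_vec psi -> superpose psi != 0 ->
     exists p, 0 < p /\
       G (proj psi) =
         p *: ((inner (superpose psi) (superpose psi))^-1 *: proj (superpose psi))) ->
  forall e, unit_vec e -> exists d, phi = d *: e.
Proof.
move=> hG e e1; have e0 := unit_vec_neq0 e1.
have [xe|x0] := eqVneq (superpose e) 0.
  by apply: (superpose_opp_collinear (c := 0) e0); rewrite xe scale0r.
have [ye|y0] := eqVneq (superpose (- e)) 0.
  have ne0 : - e != 0 by rewrite oppr_eq0.
  have [|d ->] := superpose_opp_collinear (c := 0) ne0; first by rewrite opprK ye scale0r.
  by exists (- d); rewrite scalerN scaleNr.
have [p [p0 Ge]] := hG e e1 x0.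
have [q [_ Gne]] := hG (- e) (unit_vec_opp e1) y0.
move: Gne; rewrite proj_opp Ge !scalerA => xy.
have coef0 : p * (inner (superpose e) (superpose e))^-1 != 0.
  by rewrite mulf_neq0 ?(lt0r_neq0 p0) // invr_eq0; apply: contra_neq x0 => /inner_self_eq0.
have [c] := scale_proj_collinear coef0 x0 xy; exact: superpose_opp_collinear.
Qed.

End PhaseAmbiguity.

Theorem theorem1 (C : numClosedFieldType) (n : nat) (hn : (2 <= n)%N)
  (alpha beta : C) (ha : alpha != 0) (hb : beta != 0)
  (hab : `|alpha| ^+ 2 + `|beta| ^+ 2 = 1)
  (phi : 'cV[C]_n) (hphi : unit_vec phi) :
  ~ exists F : 'M[C]_(n * n) -> 'M[C]_n,
      prob_qtrans F /\
      forall psi : 'cV[C]_n, unit_vec psi ->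
        let chi := alpha *: psi + beta *: phi in
        chi != 0 ->
        exists p : C, 0 < p /\
          F (kron (proj psi) (proj phi)) = p *: ((inner chi chi)^-1 *: proj chi).
Proof.
move=> [F [_ hF]].
have collinear := superpose_map_collinear ha hb (G := fun P => F (kron P (proj phi))) hF.
pose i0 : 'I_n := Ordinal (ltnW hn); pose i1 : 'I_n := Ordinal hn.
have [d0 phi_d0] := collinear _ (unit_vec_delta _ i0).
have [d1 phi_d1] := collinear _ (unit_vec_delta _ i1).
have d0_0 : d0 = 0 := scale_delta_eq0 (isT : i0 != i1) (etrans (esym phi_d0) phi_d1).
by move: (unit_vec_neq0 hphi); rewrite phi_d0 d0_0 scale0r eqxx.
Qed.
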